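(* Let $Y\subset X$ be a subspace of the reflection space $X$. Then the natural map $\mathrm{Trans}(X)|_{Y}\to \mathrm{Trans}(Y)$ has central kernel.
   Context: A reflection space is a topological space $X$ with continuous $\mu:X\times X\to X$, $(x,y)\mapsto x.y$, satisfying $x.x=x$, $x.(x.y)=y$, $x.(y.z)=(x.y).(x.z)$; it is pointed with base point $o$, and $Y$ is a pointed sub-reflection space containing $o$. The elementary reflection at $x$ is $s_x:y\mapsto x.y$. $\mathrm{Trans}(Y)$ is the group generated by the $s_y\circ s_o$, $y\in Y$ (acting on $Y$), and $\mathrm{Trans}(X)|_{Y}:=\langle s_{y}\circ s_o\in\mathrm{Trans}(X)\mid y\in Y\rangle$ is the subgroup of $\mathrm{Trans}(X)$ generated by the corresponding maps on $X$. The natural map is induced by $s_{y}\circ s_o\mapsto s_y\circ s_o$ (restriction of the action to $Y$). *)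

From HB Require Import structures.
From mathcomp Require Import all_boot all_order.
From mathcomp Require Import boolp classical_sets topology.
Set Implicit Arguments. Unset Strict Implicit. Unset Printing Implicit Defensive.
Local Open Scope classical_set_scope.

Definition reflection_space (X : topologicalType) (mu : X -> X -> X) : Prop :=
  [/\ continuous (fun p : X * X => mu p.1 p.2),
      (forall x, mu x x = x),
      (forall x y, mu x (mu x y) = y) &
      (forall x y z, mu x (mu y z) = mu (mu x y) (mu x z))].

(* Y is a pointed sub-reflection space of (X, o): o \in Y and Y is closed
   under the multiplication (it carries the subspace topology, for which the
   restricted multiplication is automatically continuous). *)
Definition pointed_subspace (X : Type) (mu : X -> X -> X) (o : X) (Y : set X)
  : Prop := Y o /\ (forall x y, Y x -> Y y -> Y (mu x y)).

Definition s_ (X : Type) (mu : X -> X -> X) (x : X) : X -> X := mu x.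

(* Trans(X)|_Y : the subgroup of the group of bijections of X generated by
   the maps s_y \o s_o (y \in Y).  Its elements are the words in these
   generators and their inverses; the inverse of s_y \o s_o is s_o \o s_y,
   since each s_x is an involution. *)
Inductive TransXY (X : Type) (mu : X -> X -> X) (o : X) (Y : set X)
  : (X -> X) -> Prop :=
| TransXY_id : TransXY mu o Y id
| TransXY_gen g y : Y y -> TransXY mu o Y g ->
    TransXY mu o Y (s_ mu y \o s_ mu o \o g)
| TransXY_geninv g y : Y y -> TransXY mu o Y g ->
    TransXY mu o Y (s_ mu o \o s_ mu y \o g).

(* The natural map Trans(X)|_Y -> Trans(Y) is restriction of the action to Y;
   g lies in its kernel iff g acts trivially on Y. *)
Definition in_natural_kernel (X : Type) (mu : X -> X -> X) (o : X)
  (Y : set X) (g : X -> X) : Prop :=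
  TransXY mu o Y g /\ (forall y, Y y -> g y = y).

From HB Require Import structures.
From mathcomp Require Import all_boot all_order.
From mathcomp Require Import boolp classical_sets topology.

Set Implicit Arguments.
Unset Strict Implicit.
Unset Printing Implicit Defensive.

(* Self-distributivity makes every reflection s_x, hence every element of
   Trans(X)|_Y, an automorphism of the multiplication.  An automorphism g
   fixing y satisfies g (y.x) = g y . g x = y . g x, i.e. it commutes with
   s_y.  A kernel element fixes Y pointwise (and o lies in Y), so it commutes
   with all generators s_y \o s_o and their inverses, hence with every word. *)

Section KernelCentral.

Variables (X : Type) (mu : X -> X -> X).
Hypothesis mu_distr : right_distributive mu mu.

Lemma s_morph (x : X) : {morph s_ mu x : a b / mu a b}.
Proof. exact: mu_distr. Qed.

Lemma comp_morph (f g : X -> X) :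
  {morph f : a b / mu a b} -> {morph g : a b / mu a b} ->
  {morph f \o g : a b / mu a b}.
Proof. by move=> fM gM a b /=; rewrite gM fM. Qed.

Lemma TransXY_morph (o : X) (Y : set X) (g : X -> X) :
  TransXY mu o Y g -> {morph g : a b / mu a b}.
Proof.
by elim=> [//| h y _ _ hM | h y _ _ hM]; do 2!apply: comp_morph => //;
  exact: s_morph.
Qed.

Lemma morph_fixed_comm_s (g : X -> X) (y : X) :
  {morph g : a b / mu a b} -> g y = y -> {morph g : x / s_ mu y x}.
Proof. by move=> gM gy x; rewrite /s_ gM gy. Qed.

Lemma comm_s_comm_TransXY (o : X) (Y : set X) (g : X -> X) :
  (forall y, Y y -> {morph g : x / s_ mu y x}) -> Y o ->
  forall h, TransXY mu o Y h -> {morph g : x / h x}.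
Proof.
move=> gs Yo h.
by elim=> [| {}h y Yy _ gh | {}h y Yy _ gh] x //=; rewrite !gs // gh.
Qed.

End KernelCentral.

Theorem lemma3p2 (X : topologicalType) (mu : X -> X -> X) (o : X)
  (Y : set X) :
  reflection_space mu -> pointed_subspace mu o Y ->
  forall g, in_natural_kernel mu o Y g ->
  forall h, TransXY mu o Y h -> g \o h = h \o g.
Proof.
move=> [_ _ _ mu_distr] [Yo _] g [Tg g_fixY] h Th.
have gM := TransXY_morph mu_distr Tg.
have gs y (Yy : Y y) := morph_fixed_comm_s gM (g_fixY y Yy).
by apply/funext => x /=; rewrite (comm_s_comm_TransXY gs Yo Th).
Qed.
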